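(* Each of VCPNEW, VCOP and VCUP is equivalent to the minimum weight vertex cover problem (MWVCP): every instance of one can be formulated as an instance of the other on the same graph so that an optimal solution of the new instance is an optimal solution of the original instance.
   Context: Let $G=(V,E)$ be a graph, with vertex weights $c_i\in\mathbb{R}$ and edge weights $q^1_{ij},q^2_{ij}\in\mathbb{R}$. A vertex cover is a set $P\subseteq V$ containing at least one endpoint of every edge. For $P\subseteq V$ let $E_1(P)$ be the edges with exactly one endpoint in $P$ and $E_2(P)$ the edges with both endpoints in $P$. VCPNEW is to find a vertex cover $P$ minimizing $\sum_{i\in P}c_i+\sum_{(i,j)\in E_1(P)}q^1_{ij}+\sum_{(i,j)\in E_2(P)}q^2_{ij}$; VCOP is the special case $q^1\equiv0$; VCUP is the special case $q^2\equiv0$. MWVCP: given real vertex weights $w_i$, find a vertex cover $P$ minimizing $\sum_{i\in P}w_i$. *)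

From mathcomp Require Import all_boot all_order all_algebra.
Set Implicit Arguments. Unset Strict Implicit. Unset Printing Implicit Defensive.
Import Order.TTheory GRing.Theory Num.Theory.
Local Open Scope ring_scope.

(* A (finite, loopless, possibly multi-) graph G = (V, E): the edge e : E has
   endpoints [src e] and [dst e], assumed distinct in the theorem. *)

Section VC.
Variables (R : realFieldType) (V E : finType) (src dst : E -> V).

Definition nends (P : {set V}) (e : E) : nat := (src e \in P) + (dst e \in P).

Definition is_vcover (P : {set V}) : Prop := forall e : E, (0 < nends P e)%N.

Definition E1 (P : {set V}) : {set E} := [set e | nends P e == 1%N].
Definition E2 (P : {set V}) : {set E} := [set e | nends P e == 2%N].

Definition vcpnew_cost (c : V -> R) (q1 q2 : E -> R) (P : {set V}) : R :=
  \sum_(i in P) c i + \sum_(e in E1 P) q1 e + \sum_(e in E2 P) q2 e.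

Definition vcop_cost (c : V -> R) (q2 : E -> R) (P : {set V}) : R :=
  vcpnew_cost c (fun _ => 0) q2 P.
Definition vcup_cost (c : V -> R) (q1 : E -> R) (P : {set V}) : R :=
  vcpnew_cost c q1 (fun _ => 0) P.

Definition mwvc_cost (w : V -> R) (P : {set V}) : R := \sum_(i in P) w i.

Definition optimal_vc (f : {set V} -> R) (P : {set V}) : Prop :=
  is_vcover P /\ forall Q : {set V}, is_vcover Q -> f P <= f Q.

End VC.

From mathcomp Require Import all_boot all_order all_algebra.
From mathcomp Require Import ring.
Import Order.TTheory GRing.Theory Num.Theory.
Local Open Scope ring_scope.

(* Charge each edge e its "both endpoints" price q2 e - q1 e at each endpoint
   in P, plus the constant 2 q1 e - q2 e.  On a vertex cover an edge has one or
   two endpoints in P, paying q1 e resp. q2 e in total, so the VCPNEW cost is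
   the MWVCP cost of the vertex weights c i + sum of these prices at i, up to an
   additive constant; hence both have the same optimal covers. *)

Lemma big_fiber_in (R : Type) (idx : R) (op : Monoid.com_law idx)
    (I J : finType) (p : J -> I) (A : {pred I}) (F : J -> R) :
  \big[op/idx]_(i in A) \big[op/idx]_(j | p j == i) F j =
  \big[op/idx]_(j | p j \in A) F j.
Proof.
rewrite (partition_big p (mem A)) //=; apply: eq_bigr => i Ai.
by apply: eq_bigl => j; case: eqP => [->|]; rewrite ?Ai ?andbF.
Qed.

Section VertexCoverCosts.
Variables (R : realFieldType) (V E : finType) (src dst : E -> V).

Lemma optimal_vc_shift (f g : {set V} -> R) (K : R) (P : {set V}) :
  (forall Q, is_vcover src dst Q -> f Q = g Q + K) ->
  optimal_vc src dst g P -> optimal_vc src dst f P.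
Proof.
move=> fgK [coverP optP]; split=> // Q coverQ.
by rewrite !fgK // lerD2r optP.
Qed.

Lemma mwvc_cost_vcpnew (w : V -> R) (P : {set V}) :
  mwvc_cost w P = vcpnew_cost src dst w (fun _ => 0) (fun _ => 0) P.
Proof. by rewrite /vcpnew_cost (big1 _ (mem (E1 _ _ _))) // (big1 _ (mem (E2 _ _ _))) // !addr0. Qed.

Definition vcpnew_weight (c : V -> R) (q1 q2 : E -> R) (i : V) : R :=
  c i + \sum_(e | src e == i) (q2 e - q1 e) + \sum_(e | dst e == i) (q2 e - q1 e).

Lemma vcpnew_cost_mwvc (c : V -> R) (q1 q2 : E -> R) (P : {set V}) :
  is_vcover src dst P ->
  vcpnew_cost src dst c q1 q2 P =
  mwvc_cost (vcpnew_weight c q1 q2) P + \sum_e (2%:R * q1 e - q2 e).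
Proof.
move=> coverP; rewrite /vcpnew_cost /mwvc_cost /vcpnew_weight !big_split /=.
rewrite !big_fiber_in -!addrA; congr (_ + _).
rewrite !(big_mkcond (fun e => _ \in _)) -!big_split /=; apply: eq_bigr => e _.
have := coverP e; rewrite /E1 /E2 !inE /nends.
by case: (src e \in P); case: (dst e \in P) => //= _; rewrite ?addr0 ?add0r ?mulr2n; ring.
Qed.

Lemma vcpnew_to_mwvc (c : V -> R) (q1 q2 : E -> R) :
  exists w : V -> R, forall P : {set V},
    optimal_vc src dst (mwvc_cost w) P ->
    optimal_vc src dst (vcpnew_cost src dst c q1 q2) P.
Proof.
exists (vcpnew_weight c q1 q2) => P.
by apply: optimal_vc_shift => Q; apply: vcpnew_cost_mwvc.
Qed.

Lemma mwvc_of_vcpnew (w : V -> R) (P : {set V}) :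
  optimal_vc src dst (vcpnew_cost src dst w (fun _ => 0) (fun _ => 0)) P ->
  optimal_vc src dst (mwvc_cost w) P.
Proof. by apply: (@optimal_vc_shift _ _ 0) => Q _; rewrite addr0 mwvc_cost_vcpnew. Qed.

End VertexCoverCosts.

Theorem theorem7 (R : realFieldType) (V E : finType) (src dst : E -> V)
  (loopless : forall e : E, src e != dst e) :
  (* VCPNEW <-> MWVCP *)
  ((forall (c : V -> R) (q1 q2 : E -> R), exists w : V -> R,
      forall P : {set V}, optimal_vc src dst (mwvc_cost w) P ->
        optimal_vc src dst (vcpnew_cost src dst c q1 q2) P) /\
   (forall w : V -> R, exists (c : V -> R) (q1 q2 : E -> R),
      forall P : {set V}, optimal_vc src dst (vcpnew_cost src dst c q1 q2) P ->
        optimal_vc src dst (mwvc_cost w) P)) /\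
  (* VCOP <-> MWVCP *)
  ((forall (c : V -> R) (q2 : E -> R), exists w : V -> R,
      forall P : {set V}, optimal_vc src dst (mwvc_cost w) P ->
        optimal_vc src dst (vcop_cost src dst c q2) P) /\
   (forall w : V -> R, exists (c : V -> R) (q2 : E -> R),
      forall P : {set V}, optimal_vc src dst (vcop_cost src dst c q2) P ->
        optimal_vc src dst (mwvc_cost w) P)) /\
  (* VCUP <-> MWVCP *)
  ((forall (c : V -> R) (q1 : E -> R), exists w : V -> R,
      forall P : {set V}, optimal_vc src dst (mwvc_cost w) P ->
        optimal_vc src dst (vcup_cost src dst c q1) P) /\
   (forall w : V -> R, exists (c : V -> R) (q1 : E -> R),
      forall P : {set V}, optimal_vc src dst (vcup_cost src dst c q1) P ->
        optimal_vc src dst (mwvc_cost w) P)).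
Proof.
split; [|split]; split.
- exact: vcpnew_to_mwvc.
- by move=> w; exists w, (fun _ => 0), (fun _ => 0); apply: mwvc_of_vcpnew.
- by move=> c q2; apply: vcpnew_to_mwvc.
- by move=> w; exists w, (fun _ => 0); apply: mwvc_of_vcpnew.
- by move=> c q1; apply: vcpnew_to_mwvc.
- by move=> w; exists w, (fun _ => 0); apply: mwvc_of_vcpnew.
Qed.
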